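(* Let $\mathcal{G}$ be a $k$-uniform hypergraph. Then the following are equivalent: (1) $\mathcal{G}$ is connected; (2) $\alpha_j(\mathcal{G})>0$ for all $j\in V(\mathcal{G})$; (3) $\alpha_j(\mathcal{G})>0$ for some $j\in V(\mathcal{G})$.
   Context: A $k$-uniform hypergraph $\mathcal{G}$ has a finite vertex set $V(\mathcal{G})=[n]$ and an edge set $E(\mathcal{G})$ of $k$-element subsets of $V(\mathcal{G})$. For $\mathbf{x}\in\mathbb{R}^n$, the Laplacian form is $\mathcal{L}_\mathcal{G}\mathbf{x}^k=\sum_{\{i_1,\ldots,i_k\}\in E(\mathcal{G})}\left(x_{i_1}^k+\cdots+x_{i_k}^k-k\,x_{i_1}\cdots x_{i_k}\right)$ (this is $\mathcal{L}_\mathcal{G}=\mathcal{D}_\mathcal{G}-\mathcal{A}_\mathcal{G}$ applied to $\mathbf{x}^k$, where $\mathcal{D}_\mathcal{G}$ is the diagonal degree tensor and $\mathcal{A}_\mathcal{G}$ the adjacency tensor with entries $1/(k-1)!$ on edges). The inverse Perron value of a vertex $j$ is $\alpha_j(\mathcal{G})=\min\{\mathcal{L}_\mathcal{G}\mathbf{x}^k : \mathbf{x}\in\mathbb{R}^n_+,\ \sum_{i=1}^n x_i^k=1,\ x_j=0\}$, where $\mathbb{R}^n_+$ is the set of nonnegative vectors. A path is an alternating sequence $v_0e_1v_1\cdots e_lv_l$ of distinct vertices and distinct edges with $v_{i-1},v_i\in e_i$; $\mathcal{G}$ is connected if any two vertices are joined by a path. *)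

From HB Require Import structures.
From mathcomp Require Import all_boot all_order all_algebra.
From mathcomp Require Import all_classical all_reals ereal.
Set Implicit Arguments. Unset Strict Implicit. Unset Printing Implicit Defensive.
Import Order.TTheory GRing.Theory Num.Theory.
Local Open Scope ring_scope.

Definition kuniform (n k : nat) (E : {set {set 'I_n}}) : Prop :=
  forall e, e \in E -> #|e| = k.

(* A path from u to v: v_0 e_1 v_1 ... e_l v_l with distinct vertices and
   distinct edges, v_{i-1}, v_i in e_i. vs = [v_0;...;v_l], es = [e_1;...;e_l]. *)
Definition is_path (n : nat) (E : {set {set 'I_n}}) (u v : 'I_n)
    (vs : seq 'I_n) (es : seq {set 'I_n}) : Prop :=
  [/\ size vs = (size es).+1, uniq vs, uniq es & all (fun e => e \in E) es] /\
  (forall i, (i < size es)%N ->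
      nth u vs i \in nth (@finset.set0 _) es i /\ nth u vs i.+1 \in nth (@finset.set0 _) es i) /\
  nth u vs 0 = u /\ last u vs = v.

Definition hconnected (n : nat) (E : {set {set 'I_n}}) : Prop :=
  forall u v : 'I_n, exists vs es, is_path E u v vs es.

Definition lap_form (R : realType) (n k : nat) (E : {set {set 'I_n}})
    (x : 'I_n -> R) : R :=
  \sum_(e in E) (\sum_(i in e) x i ^+ k - k%:R * \prod_(i in e) x i).

Local Open Scope classical_set_scope.

(* Inverse Perron value alpha_j, as an extended real infimum (the minimum is
   attained whenever the feasible set is nonempty; it is +oo when empty). *)
Definition alpha (R : realType) (n k : nat) (E : {set {set 'I_n}}) (j : 'I_n)
    : \bar R :=
  ereal_inf [set (lap_form k E x)%:E | x in
    [set x : 'I_n -> R | (forall i, 0 <= x i) /\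
                         \sum_(i < n) x i ^+ k = 1 /\ x j = 0]].

From HB Require Import structures.
From mathcomp Require Import all_boot all_order all_algebra.
From mathcomp Require Import all_classical all_reals ereal.
From mathcomp Require Import polyrcf lra zify.
Import Order.TTheory GRing.Theory Num.Theory.
Set Implicit Arguments.
Unset Strict Implicit.
Unset Printing Implicit Defensive.

Local Open Scope ring_scope.

(* Write L for the Laplacian form.  By AM-GM every edge term of L is
   nonnegative, and on an edge containing v and w it gives
   x_w^k <= L(x) + k x_v.  If G is connected and L(x) lies below an explicit
   threshold, this inequality, iterated from x_j = 0 along a path of fewer
   than n edges, keeps every x_i below 1/(n+1), contradicting
   sum_i x_i^k = 1; so alpha_j is at least that threshold.  If G is not
   connected, some nonempty union S of components misses j (the component of
   a vertex, or its complement), and the suitably scaled indicator of S is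
   feasible for alpha_j and constant on every edge, so L vanishes there. *)

Lemma AGM_prod_sum_expn (R : realFieldType) (I : finType) (A : {pred I})
    (x : I -> R) : {in A, forall i, 0 <= x i} ->
  #|A|%:R * \prod_(i in A) x i <= \sum_(i in A) x i ^+ #|A|.
Proof.
move=> x_ge0; have [->|A_gt0] := posnP #|A|.
  by rewrite mul0r sumr_ge0.
have xk_ge0 : {in A, forall i, 0 <= x i ^+ #|A|} by move=> i /x_ge0/exprn_ge0.
have := (leif_AGM xk_ge0).1; rewrite prodrXl (ler_pXn2r A_gt0) ?nnegrE.
- by move=> AGM; rewrite mulrC -ler_pdivlMr ?ltr0n.
- exact: prodr_ge0.
- by rewrite divr_ge0 ?ler0n ?sumr_ge0.
Qed.

Section Paths.
Variables (n : nat) (E : {set {set 'I_n}}).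

Lemma path_nil u : is_path E u u [:: u] [::].
Proof. by split; [|split]. Qed.

Lemma path_size_lt u w vs es : is_path E u w vs es -> (size es < n)%N.
Proof.
move=> [[size_vs uniq_vs _ _] _].
by have := max_card (mem vs); rewrite card_ord (card_uniqP uniq_vs) size_vs.
Qed.

Lemma path_take u w vs es p : is_path E u w vs es -> (p <= size es)%N ->
  is_path E u (nth u vs p) (take p.+1 vs) (take p es).
Proof.
move=> [[size_vs uniq_vs uniq_es es_E] [steps [head_u _]]] p_le.
have p_lt : (p < size vs)%N by rewrite size_vs.
split; [split|split; [|split]].
- by rewrite !size_takel.
- exact: take_uniq.
- exact: take_uniq.
- by apply/allP => e /mem_take; apply/allP.
- move=> i; rewrite size_takel // => i_lt.
  rewrite !nth_take //; last exact: ltnW.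
  exact/steps/(leq_trans i_lt).
- by rewrite nth_take.
- by rewrite -nth_last size_takel // nth_take.
Qed.

Lemma path_rcons u w vs es z e : is_path E u w vs es -> z \notin vs ->
    e \notin es -> e \in E -> w \in e -> z \in e ->
  is_path E u z (rcons vs z) (rcons es e).
Proof.
move=> [[size_vs uniq_vs uniq_es es_E] [steps [head_u last_w]]].
move=> zNvs eNes eE we ze.
split; [split|split; [|split]].
- by rewrite !size_rcons size_vs.
- by rewrite rcons_uniq zNvs.
- by rewrite rcons_uniq eNes.
- by rewrite all_rcons eE.
- move=> i; rewrite size_rcons ltnS leq_eqVlt => /orP [/eqP ->|i_lt].
  + rewrite -nth_last size_vs /= in last_w.
    by rewrite !nth_rcons size_vs ltnn eqxx leqnn /= last_w ltnn eqxx.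
  + by rewrite !nth_rcons i_lt size_vs ltnS (ltnW i_lt) ltnS i_lt; exact: steps.
- by rewrite nth_rcons size_vs.
- by rewrite last_rcons.
Qed.

Definition reach u : {set 'I_n} :=
  [set w | `[< exists vs es, is_path E u w vs es >]].

Lemma reach_refl u : u \in reach u.
Proof. by rewrite /reach inE asboolE; exists [:: u], [::]; exact: path_nil. Qed.

Definition edge_closed (S : {set 'I_n}) :=
  forall e, e \in E -> forall a b, a \in e -> b \in e -> a \in S -> b \in S.

Lemma edge_closedC S : edge_closed S -> edge_closed (~: S).
Proof.
by move=> S_cl e eE a b ae be; rewrite !inE; apply: contra; exact: S_cl be ae.
Qed.

(* To continue a path through an edge e to z: cut it at z if z was already
   visited; if e was already used, cut it at the first use of e and leave
   through e from there. *)
Lemma reach_edge_closed u : edge_closed (reach u).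
Proof.
move=> e eE w z we ze; rewrite /reach !inE => -[vs [es P]].
have [[size_vs _ _ _] [steps _]] := P.
have [z_vs|zNvs] := boolP (z \in vs).
  exists (take (index z vs).+1 vs), (take (index z vs) es).
  have := path_take P (_ : index z vs <= size es)%N; rewrite nth_index //.
  by apply; rewrite -ltnS -size_vs index_mem.
have [e_es|eNes] := boolP (e \in es); last first.
  by exists (rcons vs z), (rcons es e); apply: path_rcons P _ _ _ _ _.
set m := index e es; have m_lt : (m < size es)%N by rewrite index_mem.
exists (rcons (take m.+1 vs) z), (rcons (take m es) e).
apply: path_rcons (path_take P (ltnW m_lt)) _ _ eE _ ze.
- by apply: contra zNvs => /mem_take.
- by rewrite in_take // ltnn.
- by have [+ _] := steps m m_lt; rewrite nth_index.
Qed.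

End Paths.

Section Levels.
Variables (R : realFieldType) (n k : nat).
Hypothesis k_gt0 : (0 < k)%N.

Definition gap (t : R) := t ^+ k / (2 * k)%:R.

Definition level m := iter m gap (n.+1)%:R^-1.

Lemma gap_gt0 t : 0 < t -> 0 < gap t.
Proof. by move=> t_gt0; rewrite divr_gt0 ?exprn_gt0 ?ltr0n ?muln_gt0. Qed.

Lemma gap_le t : 0 <= t <= 1 -> gap t <= t.
Proof.
move=> /andP [t_ge0 t_le1]; apply: le_trans (ler_iXnr k_gt0 t_ge0 t_le1).
rewrite ler_pdivrMr ?ltr0n ?muln_gt0 // ler_peMr ?exprn_ge0 //.
by rewrite ler1n muln_gt0.
Qed.

Lemma level_gt0_le1 m : 0 < level m <= 1.
Proof.
elim: m => [|m /andP [lvl_gt0 lvl_le1]] /=.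
  by rewrite invr_gt0 ltr0n invf_le1 ?ler1n ?ltr0n.
by rewrite gap_gt0 // (le_trans (gap_le _)) ?lvl_le1 ?ltW.
Qed.

Lemma level_gt0 m : 0 < level m.
Proof. by have /andP [] := level_gt0_le1 m. Qed.

Lemma level_le m p : (m <= p)%N -> level p <= level m.
Proof.
move=> /subnKC <-; elim: (p - m)%N => [|d IH]; first by rewrite addn0.
apply: le_trans IH; rewrite addnS /level iterS.
have /andP [lvl_gt0 lvl_le1] := level_gt0_le1 (m + d).
by rewrite gap_le // ltW.
Qed.

End Levels.

Section Connected.
Variables (R : realType) (n k : nat) (E : {set {set 'I_n}}).
Hypotheses (k_gt0 : (0 < k)%N) (hE : kuniform k E).

Definition edge_term (x : 'I_n -> R) (e : {set 'I_n}) :=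
  \sum_(i in e) x i ^+ k - k%:R * \prod_(i in e) x i.

Lemma edge_term_ge0 x e : (forall i, 0 <= x i) -> e \in E -> 0 <= edge_term x e.
Proof.
by move=> x_ge0 eE; rewrite subr_ge0 -(hE eE) AGM_prod_sum_expn // => i _.
Qed.

Lemma edge_term_le_lap_form x e : (forall i, 0 <= x i) -> e \in E ->
  edge_term x e <= lap_form k E x.
Proof.
move=> x_ge0 eE; rewrite /lap_form (bigD1 e) //= lerDl.
by apply: sumr_ge0 => e' /andP [e'E _]; apply: edge_term_ge0.
Qed.

Lemma gap_add_mul_le (B : R) : 0 <= B -> gap k B + k%:R * gap k B <= B ^+ k.
Proof.
move=> B_ge0; rewrite -[X in X + _]mul1r -mulrDl nat1r /gap mulrCA.
rewrite ler_piMr ?exprn_ge0 // ler_pdivrMr ?ltr0n ?muln_gt0 // mul1r.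
by rewrite ler_nat; lia.
Qed.

Lemma edge_propagation x e v w (B : R) :
    (forall i, 0 <= x i <= 1) -> e \in E -> v \in e -> w \in e -> 0 <= B ->
  lap_form k E x < gap k B -> x v <= gap k B -> x w < B.
Proof.
move=> x01 eE ve we B_ge0 lap_lt xv_le.
have x_ge0 i : 0 <= x i by case/andP: (x01 i).
have xw_le : x w ^+ k <= \sum_(i in e) x i ^+ k.
  by rewrite (bigD1 w) //= lerDl sumr_ge0 // => i _; rewrite exprn_ge0.
have prod_le : k%:R * \prod_(i in e) x i <= k%:R * gap k B.
  rewrite ler_wpM2l // (le_trans _ xv_le) // (bigD1 v) //=.
  rewrite ler_piMr ?prodr_ge0 //.
  by rewrite prodr_ile1 // => i _; rewrite x01.
have := edge_term_le_lap_form x_ge0 eE; rewrite /edge_term => edge_le.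
have := gap_add_mul_le B_ge0 => gap_le.
have : x w ^+ k < B ^+ k by lra.
by rewrite ltr_pXn2r ?nnegrE.
Qed.

Lemma path_end_le_level x j u vs es :
    (forall i, 0 <= x i <= 1) -> x j = 0 -> lap_form k E x < level R n k n ->
  is_path E j u vs es -> x u <= level R n k 0.
Proof.
move=> x01 xj lap_lt P; have es_lt := path_size_lt P.
have [[size_vs _ _ es_E] [steps [head_j last_u]]] := P.
have x_le i : (i <= size es)%N -> x (nth j vs i) <= level R n k (n - i).
  elim: i => [_|i IH i_lt]; first by rewrite head_j xj ltW ?level_gt0.
  have [ve we] := steps i i_lt.
  have eE : nth finset.set0 es i \in E by apply: (allP es_E); rewrite mem_nth.
  have level_gap : level R n k (n - i) = gap k (level R n k (n - i.+1)).
    by rewrite -subnSK //; lia.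
  apply/ltW/(edge_propagation x01 eE ve we); first by rewrite ltW ?level_gt0.
    by rewrite -level_gap (lt_le_trans lap_lt) // level_le // leq_subr.
  by rewrite -level_gap IH // ltnW.
rewrite -last_u -nth_last size_vs.
exact: le_trans (x_le _ (leqnn _)) (level_le R n k_gt0 (leq0n _)).
Qed.

Lemma lap_form_ge_level x j : hconnected E -> (forall i, 0 <= x i) ->
  \sum_(i < n) x i ^+ k = 1 -> x j = 0 -> level R n k n <= lap_form k E x.
Proof.
move=> conn x_ge0 x_norm xj; rewrite leNgt; apply/negP => lap_lt.
have x_le1 i : x i <= 1.
  rewrite -(expr_le1 k_gt0 (x_ge0 i)) -x_norm (bigD1 i) //= lerDl.
  by rewrite sumr_ge0 // => l _; rewrite exprn_ge0.
have x_small i : x i ^+ k <= (n.+1)%:R^-1.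
  have [vs [es P]] := conn j i.
  apply: le_trans (ler_iXnr k_gt0 (x_ge0 i) (x_le1 i)) _.
  by apply: path_end_le_level P => // l; rewrite x_ge0 x_le1.
have : \sum_(i < n) x i ^+ k <= \sum_(i < n) (n.+1)%:R^-1 :> R.
  by apply: ler_sum => i _; apply: x_small.
rewrite x_norm sumr_const card_ord -[_ *+ n]mulr_natl ler_pdivlMr ?ltr0n //.
by rewrite mul1r ler_nat ltnn.
Qed.

Lemma alpha_gt0_of_connected j : hconnected E -> (0 < alpha R k E j)%E.
Proof.
move=> conn; apply: (@lt_le_trans _ _ (level R n k n)%:E).
  by rewrite lte_fin (level_gt0 R n k_gt0).
apply/ereal_infP => _ [x [x_ge0 [x_norm xj]] <-]; rewrite lee_fin.
exact: lap_form_ge_level conn x_ge0 x_norm xj.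
Qed.

End Connected.

Section Disconnected.
Variables (R : realType) (n k : nat) (E : {set {set 'I_n}}).
Hypotheses (k_gt0 : (0 < k)%N) (hE : kuniform k E).

Lemma lap_form_edgewise_const (x : 'I_n -> R) :
  (forall e, e \in E -> exists c, {in e, forall i, x i = c}) ->
  lap_form k E x = 0.
Proof.
move=> x_const; rewrite /lap_form big1 // => e eE; have [c xc] := x_const e eE.
have -> : \sum_(i in e) x i ^+ k = \sum_(i in e) c ^+ k.
  by apply: eq_bigr => i /xc ->.
have -> : \prod_(i in e) x i = \prod_(i in e) c by apply: eq_bigr => i /xc ->.
by rewrite sumr_const prodr_const (hE eE) mulr_natl subrr.
Qed.

Lemma alpha_le0_of_edge_closed (S : {set 'I_n}) j :
  edge_closed E S -> S != finset.set0 -> j \notin S -> (alpha R k E j <= 0)%E.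
Proof.
move=> S_cl S_neq0 jNS; have S_gt0 : (0 < #|S|)%N by rewrite card_gt0.
have inv_gt0 : 0 < #|S|%:R^-1 :> R by rewrite invr_gt0 ltr0n.
have [r r_gt0] := nth_root k.-1 inv_gt0; rewrite prednK // => r_k.
pose x i := if i \in S then r else 0.
have x_ge0 i : 0 <= x i by rewrite /x; case: ifP => // _; apply: ltW.
have x_norm : \sum_(i < n) x i ^+ k = 1.
  rewrite (eq_bigr (fun i => if i \in S then r ^+ k else 0)); last first.
    by move=> i _; rewrite /x; case: ifP => // _; rewrite expr0n gtn_eqF.
  rewrite -big_mkcond sumr_const r_k -[_ *+ _]mulr_natr mulVf //.
  by rewrite pnatr_eq0 -lt0n.
have x_lap : lap_form k E x = 0.
  apply: lap_form_edgewise_const => e eE.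
  have [e_sub|e_nsub] := boolP (e \subset S).
    by exists r => i /(fintype.subsetP e_sub) iS; rewrite /x iS.
  exists 0 => i ie; rewrite /x; case: ifP => // iS; case/negP: e_nsub.
  by apply/fintype.subsetP => l le; apply: S_cl eE i l ie le iS.
apply: ge_ereal_inf; exists (lap_form k E x)%:E; last by rewrite x_lap.
by exists x => //; split=> //; split=> //; rewrite /x (negbTE jNS).
Qed.

End Disconnected.

Local Open Scope ereal_scope.

Theorem theorem3p1 (R : realType) (n k : nat) (E : {set {set 'I_n}})
    (hn : (0 < n)%N) (hk : (2 <= k)%N) (hE : kuniform k E) :
  [<-> hconnected E;
       forall j : 'I_n, (0 : \bar R) < alpha R k E j;
       exists j : 'I_n, (0 : \bar R) < alpha R k E j].
Proof.
have k_gt0 : (0 < k)%N by apply: leq_trans hk.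
tfae => [conn j | all_gt0 | [j alpha_gt0]].
- exact: alpha_gt0_of_connected.
- by exists (Ordinal hn).
- have [//|/existsNP [u /existsNP [v v_unreach]]] := pselect (hconnected E).
  have vNreach : v \notin reach E u by rewrite inE; apply/asboolPn.
  suff : alpha R k E j <= 0 by rewrite leNgt alpha_gt0.
  have reach_cl : edge_closed E (reach E u) := reach_edge_closed (u := u).
  have [j_reach|jNreach] := boolP (j \in reach E u).
  + apply: (alpha_le0_of_edge_closed _ k_gt0 hE (edge_closedC reach_cl)).
    * by apply/set0Pn; exists v; rewrite inE.
    * by rewrite inE j_reach.
  + apply: (alpha_le0_of_edge_closed _ k_gt0 hE reach_cl _ jNreach).
    by apply/set0Pn; exists u; apply: reach_refl.
Qed.
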